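(* Consider a solution $(\Sigma_+,\mathcal{R}_1,\mathcal{R}_2,M,\psi,v)$, defined for all $\tau\ge\tau_0$, of the system \begin{align*} \Sigma_+' &= -(1-\Sigma_+^2)\Sigma_+ - \mathcal{R}_1 + (1+\Sigma_+)\mathcal{R}_2\cos 2\psi - \frac{4\Omega v^2}{3+v^2},\\ \mathcal{R}_1' &= 2\big[(1+\Sigma_+)\Sigma_+ + \mathcal{R}_2\cos 2\psi\big]\mathcal{R}_1 - 2(1+\Sigma_+)(\cos 2\psi)\mathcal{R}_2,\\ \mathcal{R}_2' &= 2\big[(1+\Sigma_+)\Sigma_+ + \mathcal{R}_2\cos 2\psi\big]\mathcal{R}_2 - 2(1+\Sigma_+)(\cos 2\psi)\mathcal{R}_1,\\ M' &= -\big[(1+\Sigma_+)^2 + \mathcal{R}_2\cos 2\psi + 3\mathcal{R}_2 M\sin 2\psi\big]M,\\ \psi' &= \frac{2}{M} + (1+\Sigma_+)\frac{\mathcal{R}_1}{\mathcal{R}_2}\sin 2\psi,\\ v' &= \frac{6}{3-v^2}\Sigma_+(1-v^2)v, \end{align*} with constraint $\mathcal{R}_1^2-\mathcal{R}_2^2-\left(\frac{4\Omega v}{3+v^2}\right)^2=0$, where $\Omega:=1-\Sigma_+^2-\mathcal{R}_1$ (so that $\Omega'=2\big[\Sigma_+^2+\mathcal{R}_2\cos2\psi+\frac{4v^2}{3+v^2}\Sigma_+\big]\Omega$). Then it is not possible that both \[ \lim_{\tau\to+\infty}\Omega=0\quad\text{and}\quad \lim_{\tau\to+\infty}\Sigma_+=\alpha\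 \text{ for some } 0\le\alpha<1. \]
   Context: This system describes spatially homogeneous Bianchi type VII$_0$ cosmologies with a tilted irrotational radiation perfect fluid, zero cosmological constant, in Hubble-normalized variables with dimensionless time $\tau$; $'$ denotes $d/d\tau$. Here $\mathcal{R}_1,\mathcal{R}_2,\psi$ are rotation-invariant combinations of Hubble-normalized shear and curvature components with $\mathcal{R}_1>0$, $\mathcal{R}_2>0$, and $M=1/N_+$ with $N_+$ a Hubble-normalized spatial curvature variable; for these cosmologies it is a known standing fact, used by the paper, that $M\to0$ as $\tau\to+\infty$. *)

From Stdlib Require Import Reals.
From Coquelicot Require Import Coquelicot.
Open Scope R_scope.

Definition Omega (Sp R1 : R) : R := 1 - Sp ^ 2 - R1.

From Stdlib Require Import Reals Lra Psatz.
From Coquelicot Require Import Coquelicot.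
Open Scope R_scope.

(* The averaged variable Q := Σ₊ - (1+Σ₊) R₂ M sin(2ψ) / 4 removes the
   oscillation from Σ₊: since ψ' = 2/M + ..., the derivative of the correction
   contains (1+Σ₊) R₂ cos(2ψ), the only term of Σ₊' that does not decay, and
   everything else it contributes carries a factor M -> 0.  Writing
   R₁ = 1 - Σ₊² - Ω, one gets Q' = -(1-Σ₊²)(1+Σ₊) + Ω (1 - 4v²/(3+v²)) + M E
   with E bounded (R₂ is bounded because the constraint gives R₂² <= R₁²).
   If Ω -> 0 and Σ₊ -> α in [0,1), then Q -> α while Q' -> -(1-α²)(1+α) < 0,
   which is impossible. *)

Definition eventually_bounded (f : R -> R) : Prop :=
  exists B, Rbar_locally' p_infty (fun t => Rabs (f t) <= B).

Lemma eventually_bounded_const (k : R) : eventually_bounded (fun _ => k).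
Proof. exists (Rabs k); apply filter_forall; intros; lra. Qed.

Lemma eventually_bounded_plus (f g : R -> R) :
  eventually_bounded f -> eventually_bounded g ->
  eventually_bounded (fun t => f t + g t).
Proof.
  intros [Bf Hf] [Bg Hg]; exists (Bf + Bg).
  generalize (filter_and _ _ Hf Hg); apply filter_imp; intros t [Hft Hgt].
  pose proof (Rabs_triang (f t) (g t)); lra.
Qed.

Lemma eventually_bounded_opp (f : R -> R) :
  eventually_bounded f -> eventually_bounded (fun t => - f t).
Proof.
  intros [B HB]; exists B; revert HB; apply filter_imp; intros t.
  now rewrite Rabs_Ropp.
Qed.

Lemma eventually_bounded_minus (f g : R -> R) :
  eventually_bounded f -> eventually_bounded g ->
  eventually_bounded (fun t => f t - g t).
Proof.
  intros Hf Hg; apply eventually_bounded_plus; [exact Hf|].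
  now apply eventually_bounded_opp.
Qed.

Lemma eventually_bounded_mult (f g : R -> R) :
  eventually_bounded f -> eventually_bounded g ->
  eventually_bounded (fun t => f t * g t).
Proof.
  intros [Bf Hf] [Bg Hg]; exists (Bf * Bg).
  generalize (filter_and _ _ Hf Hg); apply filter_imp; intros t [Hft Hgt].
  rewrite Rabs_mult; apply Rmult_le_compat; auto using Rabs_pos.
Qed.

Lemma eventually_bounded_pow (f : R -> R) (n : nat) :
  eventually_bounded f -> eventually_bounded (fun t => f t ^ n).
Proof.
  intros Hf; induction n as [|n IH]; simpl.
  - apply eventually_bounded_const.
  - now apply eventually_bounded_mult.
Qed.

Lemma eventually_bounded_sin (f : R -> R) :
  eventually_bounded (fun t => sin (f t)).
Proof.
  exists 1; apply filter_forall; intros t.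
  apply Rabs_le; pose proof (SIN_bound (f t)); lra.
Qed.

Lemma eventually_bounded_cos (f : R -> R) :
  eventually_bounded (fun t => cos (f t)).
Proof.
  exists 1; apply filter_forall; intros t.
  apply Rabs_le; pose proof (COS_bound (f t)); lra.
Qed.

Lemma eventually_bounded_is_lim (f : R -> R) (l : R) :
  is_lim f p_infty l -> eventually_bounded f.
Proof.
  intros Hf; apply is_lim_spec in Hf.
  exists (Rabs l + 1); generalize (Hf (mkposreal 1 Rlt_0_1)); apply filter_imp.
  simpl; intros t Ht; pose proof (Rabs_triang_inv (f t) l); lra.
Qed.

Lemma eventually_bounded_sqr_le (f g : R -> R) :
  Rbar_locally' p_infty (fun t => g t ^ 2 <= f t ^ 2) ->
  eventually_bounded f -> eventually_bounded g.
Proof.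
  intros Hgf [B HB]; exists B.
  generalize (filter_and _ _ Hgf HB); apply filter_imp; intros t [Hsq Hft].
  apply Rle_trans with (Rabs (f t)); [|exact Hft].
  apply Rsqr_le_abs_0; unfold Rsqr; lra.
Qed.

Ltac eventually_bounded_auto :=
  repeat first
    [ assumption
    | apply eventually_bounded_const | apply eventually_bounded_sin
    | apply eventually_bounded_cos | apply eventually_bounded_pow
    | apply eventually_bounded_plus | apply eventually_bounded_minus
    | apply eventually_bounded_mult | apply eventually_bounded_opp ].

Lemma is_lim_0_mult_bounded (f g : R -> R) :
  is_lim f p_infty 0 -> eventually_bounded g ->
  is_lim (fun t => f t * g t) p_infty 0.
Proof.
  intros Hf [B HB].
  assert (Habs : is_lim (fun t => B * Rabs (f t)) p_infty 0).
  { rewrite <- (Rmult_0_r B), <- Rabs_R0.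
    apply (is_lim_scal_l _ _ _ (Rabs 0)), (is_lim_Rabs _ _ 0), Hf. }
  apply is_lim_le_le_loc with (fun t => - (B * Rabs (f t))) (fun t => B * Rabs (f t)).
  - revert HB; apply filter_imp; intros t Ht.
    apply Rabs_le_between; rewrite Rabs_mult, Rmult_comm.
    apply Rmult_le_compat_r; auto using Rabs_pos.
  - rewrite <- Ropp_0; apply (is_lim_opp _ _ 0); exact Habs.
  - exact Habs.
Qed.

Lemma is_lim_mult' (f g : R -> R) (x : Rbar) (lf lg : R) :
  is_lim f x lf -> is_lim g x lg -> is_lim (fun t => f t * g t) x (lf * lg).
Proof. intros Hf Hg; exact (is_lim_mult f g x lf lg Hf Hg I). Qed.

Lemma is_lim_pow' (f : R -> R) (x : Rbar) (l : R) (n : nat) :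
  is_lim f x l -> is_lim (fun t => f t ^ n) x (l ^ n).
Proof.
  intros Hf; induction n as [|n IH]; simpl.
  - apply is_lim_const.
  - now apply is_lim_mult'.
Qed.

Lemma is_lim_derive_neg_not_is_lim (f df : R -> R) (a D l : R) :
  (forall t, a < t -> is_derive f t (df t)) ->
  is_lim df p_infty D -> D < 0 -> ~ is_lim f p_infty l.
Proof.
  intros Hder HdD HD Hf.
  apply is_lim_spec in HdD; apply is_lim_spec in Hf.
  assert (HD2 : 0 < - D / 2) by lra.
  destruct (filter_and _ _ (filter_and _ _ (HdD (mkposreal _ HD2)) (Hf (mkposreal 1 Rlt_0_1)))
              (ex_intro _ a (fun t Ht => Ht) : Rbar_locally' p_infty (fun t => a < t)))
    as [N HN]; simpl in HN.
  (* Over a step of length h the derivative makes f drop by more than 2,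
     yet f stays within 1 of l. *)
  set (h := 4 / - D).
  assert (Hh : 0 < h) by (apply Rdiv_lt_0_compat; lra).
  destruct (MVT_cor2 f df (N + 1) (N + 1 + h)) as [c [Hmvt Hc]]; [lra| |].
  { intros c Hc; apply is_derive_Reals, Hder.
    destruct (HN (N + 1) ltac:(lra)) as [_ Ha]; lra. }
  destruct (HN c ltac:(lra)) as [[Hdc _] _].
  destruct (HN (N + 1) ltac:(lra)) as [[_ Hfa] _].
  destruct (HN (N + 1 + h) ltac:(lra)) as [[_ Hfb] _].
  apply Rabs_def2 in Hdc; apply Rabs_def2 in Hfa; apply Rabs_def2 in Hfb.
  assert (Hdrop : df c * h < -2).
  { replace (-2) with (D / 2 * h) by (unfold h; field; lra).
    apply Rmult_lt_compat_r; lra. }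
  replace (N + 1 + h - (N + 1)) with h in Hmvt by ring.
  lra.
Qed.

Lemma is_lim_R1_of_Omega (Sp R1 : R -> R) (alpha : R) :
  is_lim Sp p_infty alpha -> is_lim (fun t => Omega (Sp t) (R1 t)) p_infty 0 ->
  is_lim R1 p_infty (1 - alpha ^ 2).
Proof.
  intros HSp HOm; rewrite <- (Rminus_0_r (1 - alpha ^ 2)).
  apply (is_lim_ext (fun t => 1 - Sp t ^ 2 - Omega (Sp t) (R1 t))).
  { intros t; unfold Omega; ring. }
  apply is_lim_minus'; [apply is_lim_minus'; [apply is_lim_const | apply is_lim_pow'] |];
    assumption.
Qed.

Definition tilt_factor (x : R) : R := x ^ 2 / (3 + x ^ 2).

Lemma Rabs_tilt_factor_le_1 (x : R) : Rabs (tilt_factor x) <= 1.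
Proof.
  unfold tilt_factor; pose proof (pow2_ge_0 x).
  apply Rabs_le; split.
  - apply Rle_trans with 0; [lra|]; apply Rdiv_le_0_compat; lra.
  - apply Rmult_le_reg_r with (3 + x ^ 2); [lra|].
    unfold Rdiv; rewrite Rmult_assoc, Rinv_l; lra.
Qed.

Section AveragedShear.

Variables (tau0 : R) (Sp R1 R2 M psi v : R -> R).

Definition averaged_shear (t : R) : R :=
  Sp t - (1 + Sp t) * R2 t * M t * sin (2 * psi t) / 4.

(* dS, dR2 and -K are Σ₊', R₂' and M'/M; the remainder collects the terms of
   the derivative of [averaged_shear] that carry a factor M. *)
Definition averaging_remainder (t : R) : R :=
  let S := Sp t in
  let s := sin (2 * psi t) in
  let c := cos (2 * psi t) in
  let dS := - (1 - S ^ 2) * S - R1 t + (1 + S) * R2 t * c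
            - 4 * Omega S (R1 t) * tilt_factor (v t) in
  let dR2 := 2 * ((1 + S) * S + R2 t * c) * R2 t - 2 * (1 + S) * c * R1 t in
  let K := (1 + S) ^ 2 + R2 t * c + 3 * R2 t * M t * s in
  - (dS * R2 t + (1 + S) * dR2 - (1 + S) * R2 t * K) * s / 4
  - (1 + S) ^ 2 * R1 t * s * c / 2.

Definition averaged_shear_derivative (t : R) : R :=
  (Sp t ^ 2 - 1) * (1 + Sp t)
  + Omega (Sp t) (R1 t) * (1 - 4 * tilt_factor (v t))
  + M t * averaging_remainder t.

Lemma is_lim_averaged_shear (alpha : R) :
  is_lim Sp p_infty alpha -> is_lim M p_infty 0 -> eventually_bounded R2 ->
  is_lim averaged_shear p_infty alpha.
Proof.
  intros HSp HM HR2.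
  apply (is_lim_ext (fun t => Sp t - M t * ((1 + Sp t) * R2 t * sin (2 * psi t) / 4))).
  { intros t; unfold averaged_shear; field. }
  rewrite <- (Rminus_0_r alpha); apply is_lim_minus'; [exact HSp|].
  apply is_lim_0_mult_bounded; [exact HM|].
  apply eventually_bounded_is_lim in HSp; unfold Rdiv; eventually_bounded_auto.
Qed.

Lemma is_lim_averaged_shear_derivative (alpha : R) :
  is_lim Sp p_infty alpha -> is_lim (fun t => Omega (Sp t) (R1 t)) p_infty 0 ->
  is_lim M p_infty 0 -> eventually_bounded R2 ->
  is_lim averaged_shear_derivative p_infty ((alpha ^ 2 - 1) * (1 + alpha)).
Proof.
  intros HSp HOm HM HR2.
  pose proof (is_lim_R1_of_Omega Sp R1 alpha HSp HOm) as HR1.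
  assert (Hw : eventually_bounded (fun t => tilt_factor (v t))).
  { exists 1; apply filter_forall; intros t; apply Rabs_tilt_factor_le_1. }
  apply eventually_bounded_is_lim in HR1.
  apply eventually_bounded_is_lim in HSp as HSpb.
  apply eventually_bounded_is_lim in HM as HMb.
  rewrite <- (Rplus_0_r (_ * _)), <- (Rplus_0_r (_ * _ + 0)).
  apply is_lim_plus'; [apply is_lim_plus'|].
  - apply is_lim_mult'; [apply is_lim_minus'; [apply is_lim_pow' | apply is_lim_const]
                        | apply is_lim_plus'; [apply is_lim_const|]]; assumption.
  - apply is_lim_0_mult_bounded; [exact HOm|]; eventually_bounded_auto.
  - apply is_lim_0_mult_bounded; [exact HM|].
    unfold averaging_remainder, Omega, Rdiv; cbv zeta; eventually_bounded_auto.
Qed.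

Hypothesis hR2 : forall t, tau0 <= t -> 0 < R2 t.
Hypothesis hM : forall t, tau0 <= t -> M t <> 0.
Hypothesis dSp : forall t, tau0 < t ->
  is_derive Sp t
    (- (1 - Sp t ^ 2) * Sp t - R1 t + (1 + Sp t) * R2 t * cos (2 * psi t)
     - 4 * Omega (Sp t) (R1 t) * v t ^ 2 / (3 + v t ^ 2)).
Hypothesis dR2 : forall t, tau0 < t ->
  is_derive R2 t
    (2 * ((1 + Sp t) * Sp t + R2 t * cos (2 * psi t)) * R2 t
     - 2 * (1 + Sp t) * cos (2 * psi t) * R1 t).
Hypothesis dM : forall t, tau0 < t ->
  is_derive M t
    (- ((1 + Sp t) ^ 2 + R2 t * cos (2 * psi t)
        + 3 * R2 t * M t * sin (2 * psi t)) * M t).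
Hypothesis dpsi : forall t, tau0 < t ->
  is_derive psi t
    (2 / M t + (1 + Sp t) * (R1 t / R2 t) * sin (2 * psi t)).

Lemma is_derive_averaged_shear (t : R) :
  tau0 < t -> is_derive averaged_shear t (averaged_shear_derivative t).
Proof.
  intros Ht; unfold averaged_shear; auto_derive.
  - repeat split; eexists; eauto.
  - rewrite (is_derive_unique (fun u : R => Sp u) _ _ (dSp t Ht)),
      (is_derive_unique (fun u : R => R2 u) _ _ (dR2 t Ht)),
      (is_derive_unique (fun u : R => M u) _ _ (dM t Ht)),
      (is_derive_unique (fun u : R => psi u) _ _ (dpsi t Ht)).
    assert (HM0 := hM t (Rlt_le _ _ Ht)); assert (HR20 := hR2 t (Rlt_le _ _ Ht)).
    assert (Hv := pow2_ge_0 (v t)).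
    unfold averaged_shear_derivative, averaging_remainder, tilt_factor, Omega; cbv zeta.
    field; lra.
Qed.

End AveragedShear.

Theorem lemma2 (tau0 : R) (Sp R1 R2 M psi v : R -> R)
  (* standing assumptions / well-definedness on [tau0, +oo) *)
  (hR1 : forall t, tau0 <= t -> 0 < R1 t)
  (hR2 : forall t, tau0 <= t -> 0 < R2 t)
  (hM : forall t, tau0 <= t -> M t <> 0)
  (hv : forall t, tau0 <= t -> 3 - v t ^ 2 <> 0)
  (* the evolution equations *)
  (dSp : forall t, tau0 < t ->
     is_derive Sp t
       (- (1 - Sp t ^ 2) * Sp t - R1 t + (1 + Sp t) * R2 t * cos (2 * psi t)
        - 4 * Omega (Sp t) (R1 t) * v t ^ 2 / (3 + v t ^ 2)))
  (dR1 : forall t, tau0 < t ->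
     is_derive R1 t
       (2 * ((1 + Sp t) * Sp t + R2 t * cos (2 * psi t)) * R1 t
        - 2 * (1 + Sp t) * cos (2 * psi t) * R2 t))
  (dR2 : forall t, tau0 < t ->
     is_derive R2 t
       (2 * ((1 + Sp t) * Sp t + R2 t * cos (2 * psi t)) * R2 t
        - 2 * (1 + Sp t) * cos (2 * psi t) * R1 t))
  (dM : forall t, tau0 < t ->
     is_derive M t
       (- ((1 + Sp t) ^ 2 + R2 t * cos (2 * psi t)
           + 3 * R2 t * M t * sin (2 * psi t)) * M t))
  (dpsi : forall t, tau0 < t ->
     is_derive psi t
       (2 / M t + (1 + Sp t) * (R1 t / R2 t) * sin (2 * psi t)))
  (dv : forall t, tau0 < t ->
     is_derive v t (6 / (3 - v t ^ 2) * Sp t * (1 - v t ^ 2) * v t))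
  (* the constraint *)
  (hcon : forall t, tau0 <= t ->
     R1 t ^ 2 - R2 t ^ 2
       - (4 * Omega (Sp t) (R1 t) * v t / (3 + v t ^ 2)) ^ 2 = 0)
  (* standing fact: M -> 0 as tau -> +oo *)
  (hMlim : is_lim M p_infty 0) :
  ~ (is_lim (fun t => Omega (Sp t) (R1 t)) p_infty 0 /\
     exists alpha : R, 0 <= alpha < 1 /\ is_lim Sp p_infty alpha).
Proof.
  intros [HOm [alpha [[Halpha0 Halpha1] HSp]]].
  pose proof (is_lim_R1_of_Omega Sp R1 alpha HSp HOm) as HR1.
  assert (HR2 : eventually_bounded R2).
  { apply eventually_bounded_sqr_le with R1; [|exact (eventually_bounded_is_lim _ _ HR1)].
    exists tau0; intros t Ht; specialize (hcon t (Rlt_le _ _ Ht)).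
    pose proof (pow2_ge_0 (4 * Omega (Sp t) (R1 t) * v t / (3 + v t ^ 2))); lra. }
  apply (is_lim_derive_neg_not_is_lim (averaged_shear Sp R2 M psi)
           (averaged_shear_derivative Sp R1 R2 M psi v) tau0 ((alpha ^ 2 - 1) * (1 + alpha)) alpha).
  - intros t; apply (is_derive_averaged_shear tau0); assumption.
  - apply is_lim_averaged_shear_derivative; assumption.
  - nra.
  - apply is_lim_averaged_shear; assumption.
Qed.
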